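(* Let $q$ be a prime power, $l\ge1$, $t=q^l$, and let $i$ be an integer with $1\le i<q-1$. Let $G_4(x)=x^t+x^{t-1}+1$, $G_5(x)=x^{t+1}+x^t+x$, and $L_4^*=\{\alpha\in GF(t^2):\ \alpha\neq0,\ G_4(\alpha)\ne0\}=\{\alpha_1,\dots,\alpha_n\}$. Let $H_4^{*(i)}$ be the $it\times n$ matrix with entries $\alpha_k^s/G_4(\alpha_k)^i$ ($s=0,\dots,it-1$, $k=1,\dots,n$). Then the matrix obtained by placing the row $\big(1/G_5(\alpha_1)^i,\dots,1/G_5(\alpha_n)^i\big)$ on top of $H_4^{*(i)}$ is a parity-check matrix of $\Gamma_5^{(i)}=\Gamma(L_4^*,G_5^i)$; that is, $\Gamma_5^{(i)}=\{c\in\Gamma_4^{*(i)}:\ \sum_k c_k/G_5(\alpha_k)^i=0\}$ where $\Gamma_4^{*(i)}=\Gamma(L_4^*,G_4^i)$, and the entries $1/G_5(\alpha_k)^i$ all lie in $GF(t)$.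
   Context: For a set $L=\{\alpha_1,\dots,\alpha_n\}$ of distinct elements of $GF(t^2)$ and $P\in GF(t^2)[x]$ with $P(\alpha_k)\neq0$ for all $k$, the $q$-ary Goppa code is $\Gamma(L,P)=\{c\in GF(q)^n:\ \sum_k c_k\alpha_k^s/P(\alpha_k)=0 \text{ for } s=0,\dots,\deg P-1\}$. A matrix $H$ over $GF(t^2)$ is a parity-check matrix of a $q$-ary code $C$ if $C=\{c\in GF(q)^n: cH^T=0\}$. *)

From mathcomp Require Import all_boot all_order all_algebra.
Set Implicit Arguments. Unset Strict Implicit. Unset Printing Implicit Defensive.
Import GRing.Theory.
Local Open Scope ring_scope.

(* Elements of GF(q) inside a finite field F (of order a power of q) are
   exactly the x with x^q = x. *)
Definition in_subfield (F : finFieldType) (q : nat) (x : F) : bool := x ^+ q == x.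

Definition goppa (F : finFieldType) (q n : nat) (alpha : 'I_n -> F) (P : {poly F})
    (c : 'rV[F]_n) : Prop :=
  (forall k, in_subfield q (c 0 k)) /\
  (forall s : nat, (s < (size P).-1)%N ->
     \sum_(k < n) c 0 k * alpha k ^+ s / P.[alpha k] = 0).

Definition parity_check (F : finFieldType) (q m n : nat) (H : 'M[F]_(m, n))
    (C : 'rV[F]_n -> Prop) : Prop :=
  forall c : 'rV[F]_n, C c <-> ((forall k, in_subfield q (c 0 k)) /\ c *m H^T = 0).

Definition G4 (F : finFieldType) (t : nat) : {poly F} := ('X^t + 'X^(t.-1) + 1)%R.
Definition G5 (F : finFieldType) (t : nat) : {poly F} := ('X^(t.+1) + 'X^t + 'X)%R.

From mathcomp Require Import all_boot all_order all_algebra all_field zify.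
Import GRing.Theory.
Local Open Scope ring_scope.

(* The checks of Gamma(L, G5^i) with index s >= i are, after cancelling
   G5 = X * G4, exactly the checks of Gamma(L, G4^i); the check s = 0 is the
   extra row.  The remaining checks 0 < s < i follow from the G4 checks of
   index t*s - i by raising them to the t-th power: Frobenius fixes the code
   symbols and the value G5(alpha) = alpha^(t+1) + alpha^t + alpha, which lies
   in GF(t) since alpha^(t^2) = alpha. *)

Definition syndrome {F : fieldType} {n : nat} (alpha : 'I_n -> F) (P : {poly F})
    (c : 'rV[F]_n) (s : nat) : F :=
  \sum_(k < n) c 0 k * alpha k ^+ s / P.[alpha k].

Lemma hornerG4 (F : finFieldType) t x : (G4 F t).[x] = x ^+ t + x ^+ t.-1 + 1.
Proof. by rewrite /G4 !hornerE. Qed.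

Lemma hornerG5 (F : finFieldType) t x : (0 < t)%N -> (G5 F t).[x] = x * (G4 F t).[x].
Proof. by move=> t_gt0; rewrite /G5 hornerG4 !hornerE !mulrDr mulr1 -!exprS prednK. Qed.

Lemma size_G4 (F : finFieldType) t : (0 < t)%N -> size (G4 F t) = t.+1.
Proof.
move=> t_gt0; rewrite /G4 -addrA size_polyDl size_polyXn //.
apply: leq_ltn_trans (size_polyD _ _) _; rewrite size_polyXn size_poly1 gtn_max.
by rewrite prednK // leqnn ltnS.
Qed.

Lemma size_G5 (F : finFieldType) t : (0 < t)%N -> size (G5 F t) = t.+2.
Proof.
move=> t_gt0; rewrite /G5 -addrA size_polyDl size_polyXn //.
apply: leq_ltn_trans (size_polyD _ _) _; rewrite size_polyXn size_polyX gtn_max.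
by rewrite ltnSn /= !ltnS.
Qed.

Lemma fixed_exprXn (R : pzSemiRingType) (x : R) q l : x ^+ q = x -> x ^+ (q ^ l) = x.
Proof. by move=> xq; elim: l => [|l IHl]; rewrite ?expr1 // expnS exprM xq IHl. Qed.

Lemma exprn_sum_pchar (F : fieldType) t n (f : 'I_n -> F) : [pchar F].-nat t ->
  (\sum_(k < n) f k) ^+ t = \sum_(k < n) f k ^+ t.
Proof.
move=> pchar_t; have t_gt0 : (0 < t)%N by case/andP: pchar_t.
apply: (big_morph (fun x => x ^+ t)) => [x y|]; first exact: exprDn_pchar.
by rewrite expr0n eqn0Ngt t_gt0.
Qed.

(* Used with g = G4(x), so that x * g = G5(x). *)
Lemma exprn_syndrome_term (F : fieldType) t (x g c : F) s i :
  x != 0 -> x ^+ (t * t) = x -> (x * g) ^+ t = x * g -> c ^+ t = c ->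
  (i <= t * s)%N ->
  (c * x ^+ (t * s - i) / g ^+ i) ^+ t = c * x ^+ s / (x * g) ^+ i.
Proof.
move=> x_neq0 xtt ht ct le_i_ts.
have xt_neq0 : x ^+ t != 0 by rewrite expf_neq0.
have gtE : g ^+ t = (x * g) / x ^+ t by rewrite -ht exprMn mulrC mulKf.
have xE : x ^+ s = x ^+ ((t * s - i) * t) * x ^+ (t * i).
  by rewrite -exprD mulnC -mulnDr subnK // mulnA exprM xtt.
rewrite !exprMn exprVn ct -!exprM [(i * t)%N]mulnC [g ^+ _]exprM gtE.
by rewrite expr_div_n -exprM xE -exprMn invf_div !mulrA.
Qed.

Lemma goppaE (F : finFieldType) q n (alpha : 'I_n -> F) P c :
  goppa q alpha P c = ((forall k, in_subfield q (c 0 k)) /\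
    forall s, (s < (size P).-1)%N -> syndrome alpha P c s = 0).
Proof. by []. Qed.

Lemma mulmx_trmx_eq0 (R : pzRingType) m n (c : 'rV[R]_n) (H : 'M[R]_(m, n)) :
  c *m H^T = 0 <-> forall s : 'I_m, \sum_(k < n) c 0 k * H s k = 0.
Proof.
have cHE s : (c *m H^T) 0 s = \sum_(k < n) c 0 k * H s k.
  by rewrite mxE; apply: eq_bigr => k _; rewrite mxE.
split=> [/rowP cH0 s | cH0]; first by rewrite -cHE cH0 mxE.
by apply/rowP=> s; rewrite cHE cH0 mxE.
Qed.

Lemma mulmx_tr_col_mx_eq0 (R : pzRingType) m1 m2 n (c : 'rV[R]_n)
    (H1 : 'M[R]_(m1, n)) (H2 : 'M[R]_(m2, n)) :
  c *m (col_mx H1 H2)^T = 0 <-> c *m H1^T = 0 /\ c *m H2^T = 0.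
Proof.
rewrite tr_col_mx mul_mx_row; split=> [/eqP | [-> ->]]; last by rewrite row_mx0.
by rewrite row_mx_eq0 => /andP[/eqP -> /eqP ->].
Qed.

Section FiniteFieldOfSquareOrder.

Context {F : finFieldType} {t : nat}.
Hypotheses (pchar_t : [pchar F].-nat t) (card_F : #|F| = (t ^ 2)%N).

Let t_gt0 : (0 < t)%N. Proof. by case/andP: pchar_t. Qed.

Lemma expf_card_sqrt (x : F) : x ^+ (t * t) = x.
Proof. by rewrite mulnn -card_F expf_card. Qed.

Lemma hornerG5_frobenius (x : F) : (G5 F t).[x] ^+ t = (G5 F t).[x].
Proof.
rewrite /G5 !hornerE !exprDn_pchar // -!exprM expf_card_sqrt mulSn exprD.
by rewrite expf_card_sqrt -exprSr addrAC.
Qed.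

Lemma hornerG5_expV_subfield (x : F) i : in_subfield t ((G5 F t).[x] ^+ i)^-1.
Proof. by rewrite /in_subfield exprVn -exprM mulnC exprM hornerG5_frobenius. Qed.

Context {n : nat} {alpha : 'I_n -> F} {i : nat}.
Hypothesis alpha_neq0 : forall k, alpha k != 0.

Lemma syndrome_G5_addn (c : 'rV[F]_n) s :
  syndrome alpha (G5 F t ^+ i) c (s + i) = syndrome alpha (G4 F t ^+ i) c s.
Proof.
apply: eq_bigr => k _; rewrite !horner_exp hornerG5 // exprD exprMn invfM.
by rewrite !mulrA mulfK ?expf_neq0.
Qed.

Lemma syndrome_G5_0 (c : 'rV[F]_n) :
  syndrome alpha (G5 F t ^+ i) c 0 = \sum_(k < n) c 0 k / (G5 F t).[alpha k] ^+ i.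
Proof. by apply: eq_bigr => k _; rewrite expr0 mulr1 horner_exp. Qed.

Lemma syndrome_G4_frobenius (c : 'rV[F]_n) s :
  (forall k, c 0 k ^+ t = c 0 k) -> (i <= t * s)%N ->
  syndrome alpha (G4 F t ^+ i) c (t * s - i) ^+ t = syndrome alpha (G5 F t ^+ i) c s.
Proof.
move=> ct le_i_ts; rewrite exprn_sum_pchar //; apply: eq_bigr => k _.
rewrite !horner_exp hornerG5 // exprn_syndrome_term // ?expf_card_sqrt //.
by rewrite -hornerG5 // hornerG5_frobenius.
Qed.

Context {q l : nat}.
Hypotheses (t_def : t = (q ^ l)%N) (i_gt0 : (0 < i)%N) (i_le_t : (i <= t)%N).

Lemma goppa_G5_iff c :
  goppa q alpha (G5 F t ^+ i) c <->
  goppa q alpha (G4 F t ^+ i) c /\ \sum_(k < n) c 0 k / (G5 F t).[alpha k] ^+ i = 0.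
Proof.
have size5 : (size (G5 F t ^+ i)).-1 = (t.+1 * i)%N by rewrite size_exp size_G5.
have size4 : (size (G4 F t ^+ i)).-1 = (t * i)%N by rewrite size_exp size_G4.
rewrite !goppaE size5 size4; split.
  move=> [c_sub G5_checks]; split; first split=> // s lt_s.
    by rewrite -syndrome_G5_addn; apply: G5_checks; rewrite mulSn; lia.
  by rewrite -syndrome_G5_0; apply: G5_checks; rewrite muln_gt0 i_gt0.
move=> [[c_sub G4_checks] G5_check0]; split=> // s lt_s.
have [le_i_s | lt_s_i] := leqP i s.
  by rewrite -(subnK le_i_s) syndrome_G5_addn; apply: G4_checks; lia.
case: s lt_s lt_s_i => [|s] _ lt_s_i; first by rewrite syndrome_G5_0.
have c_fixed k : c 0 k ^+ t = c 0 k by rewrite t_def fixed_exprXn //; apply/eqP/c_sub.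
rewrite -syndrome_G4_frobenius // ?G4_checks ?expr0n ?gtn_eqF //; nia.
Qed.

Lemma parity_check_G5 :
  parity_check q
    (col_mx (\row_(k < n) ((G5 F t).[alpha k] ^+ i)^-1)
            (\matrix_(s < i * t, k < n) (alpha k ^+ s / (G4 F t).[alpha k] ^+ i)))
    (goppa q alpha (G5 F t ^+ i)).
Proof.
move=> c; have size4 : (size (G4 F t ^+ i)).-1 = (i * t)%N.
  by rewrite size_exp size_G4 // mulnC.
set r := \row_(k < n) _; set H4 := \matrix_(s < _, k < n) _.
have rE s : \sum_(k < n) c 0 k * r s k = \sum_(k < n) c 0 k / (G5 F t).[alpha k] ^+ i.
  by apply: eq_bigr => k _; rewrite mxE.
have H4E s : \sum_(k < n) c 0 k * H4 s k = syndrome alpha (G4 F t ^+ i) c s.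
  by apply: eq_bigr => k _; rewrite mxE mulrA horner_exp.
rewrite goppa_G5_iff goppaE size4 mulmx_tr_col_mx_eq0 !mulmx_trmx_eq0.
split=> [[[c_sub G4_checks] G5_check0] | [c_sub [r_check H4_checks]]].
  by split=> //; split=> s; rewrite ?rE ?H4E ?G4_checks.
split; last by rewrite -(rE 0); apply: r_check.
by split=> // s lt_s; rewrite -(H4E (Ordinal lt_s)); apply: H4_checks.
Qed.

End FiniteFieldOfSquareOrder.

Theorem lemma6 (F : finFieldType) (p m l t i : nat) (q := (p ^ m)%N)
    (Hp : prime p) (Hm : (0 < m)%N) (Hl : (0 < l)%N) (Ht : t = (q ^ l)%N)
    (HF : #|F| = (t ^ 2)%N) (Hi1 : (1 <= i)%N) (Hi2 : (i < q - 1)%N)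
    (n : nat) (alpha : 'I_n -> F) (Hinj : injective alpha)
    (HL : forall x : F, (x != 0 /\ (G4 F t).[x] != 0) <-> exists k, alpha k = x) :
  let H4 := \matrix_(s < i * t, k < n) (alpha k ^+ s / ((G4 F t).[alpha k]) ^+ i) in
  let r := \row_(k < n) ((G5 F t).[alpha k] ^+ i)^-1 in
  parity_check q (col_mx r H4) (goppa q alpha (G5 F t ^+ i)) /\
  (forall c : 'rV[F]_n, goppa q alpha (G5 F t ^+ i) c <->
     (goppa q alpha (G4 F t ^+ i) c /\
      \sum_(k < n) c 0 k / (G5 F t).[alpha k] ^+ i = 0)) /\
  (forall k : 'I_n, in_subfield t (((G5 F t).[alpha k] ^+ i)^-1)).
Proof.
move=> H4 r.
have pchar_p : p \in [pchar F].
  by apply: (@card_finPcharP F p (m * l * 2)); rewrite // HF Ht /q -!expnM mulnA.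
have pchar_t : [pchar F].-nat t.
  by rewrite (eq_pnat _ (pcharf_eq pchar_p)) Ht /q -expnM pnatX pnat_id.
have le_q_t : (q <= t)%N.
  by rewrite Ht -{1}(expn1 q) leq_pexp2l // expn_gt0 prime_gt0.
have alpha_neq0 k : alpha k != 0 by have [] := proj2 (HL (alpha k)) (ex_intro _ k erefl).
have i_le_t : (i <= t)%N by lia.
split; last split.
- exact (parity_check_G5 pchar_t HF alpha_neq0 Ht Hi1 i_le_t).
- exact (goppa_G5_iff pchar_t HF alpha_neq0 Ht Hi1 i_le_t).
- move=> k; exact: hornerG5_expV_subfield.
Qed.
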